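(* For every program $C\in$ pProgs and every $\omega$-chain of run-times $f_1\preceq f_2\preceq\cdots$ in $\mathbb{T}$, $\mathsf{ert}[C](\sup_n f_n)=\sup_n \mathsf{ert}[C](f_n)$, where suprema are taken pointwise.
   Context: Programs $C\in$ pProgs are generated by the grammar $C ::= \mathtt{empty} \mid \mathtt{skip} \mid \mathtt{halt} \mid x :\approx \mu \mid C;C \mid \{C\}\,\square\,\{C\} \mid \mathtt{if}\,(\xi)\,\{C\}\,\mathtt{else}\,\{C\} \mid \mathtt{while}\,(\xi)\,\{C\}$, where $x$ is a program variable, $\mu$ a distribution expression and $\xi$ a probabilistic guard. A state $\sigma\in\Sigma$ maps variables to values; $[\![\mu]\!]:\Sigma\to\mathcal{D}(\mathsf{Vals})$ gives discrete distributions of total mass 1, and $[\xi:\mathsf{true}](\sigma)$, $[\xi:\mathsf{false}](\sigma)=1-[\xi:\mathsf{true}](\sigma)$ are the guard probabilities. Run-times: $\mathbb{T}=\{f:\Sigma\to\mathbb{R}_{\ge0}\cup\{\infty\}\}$, ordered pointwise by $\preceq$, with pointwise arithmetic; $\mathbf{c}=\lambda\sigma.c$. The transformer $\mathsf{ert}[C]:\mathbb{T}\to\mathbb{T}$: $\mathsf{ert}[\mathtt{empty}](f)=f$; $\mathsf{ert}[\mathtt{skip}](f)=\mathbf{1}+f$; $\mathsf{ert}[\mathtt{halt}](f)=\mathbf{0}$; $\mathsf{ert}[x:\approx\mu](f)=\mathbf{1}+\lambda\sigma.\sum_v[\![\mu]\!](\sigma)(v)\, f(\sigma[x/v])$; $\mathsf{ert}[C_1;C_2](f)=\mathsf{ert}[C_1](\mathsf{ert}[C_2](f))$;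 $\mathsf{ert}[\{C_1\}\square\{C_2\}](f)=\max\{\mathsf{ert}[C_1](f),\mathsf{ert}[C_2](f)\}$; $\mathsf{ert}[\mathtt{if}(\xi)\{C_1\}\mathtt{else}\{C_2\}](f)=\mathbf{1}+[\xi:\mathsf{true}]\cdot\mathsf{ert}[C_1](f)+[\xi:\mathsf{false}]\cdot\mathsf{ert}[C_2](f)$; $\mathsf{ert}[\mathtt{while}(\xi)\{C'\}](f)=\mathrm{lfp}\,X.\ \mathbf{1}+[\xi:\mathsf{false}]\cdot f+[\xi:\mathsf{true}]\cdot\mathsf{ert}[C'](X)$. *)

(* run-times are [0,oo]-valued functions, encoded as
   functions into the extended reals \bar R that are pointwise nonnegative. *)
From HB Require Import structures.
From mathcomp Require Import all_boot all_order all_algebra.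
From mathcomp Require Import all_classical all_reals all_analysis.
Set Implicit Arguments. Unset Strict Implicit. Unset Printing Implicit Defensive.
Import Order.TTheory GRing.Theory Num.Theory.
Local Open Scope classical_set_scope.
Local Open Scope ring_scope.

Section PProgs.
Variables (R : realType) (Var : eqType) (Val : choiceType).

Definition state := Var -> Val.

Definition upd (s : state) (x : Var) (v : Val) : state :=
  fun y => if y == x then v else s y.

Record dexp := DExp {
  dsem : state -> Val -> R;
  dsem_ge0 : forall s v, 0 <= dsem s v;
  dsem_mass1 : forall s, (\esum_(v in [set: Val]) (dsem s v)%:E = 1)%E }.

Record pguard := PGuard {
  gtrue : state -> R;
  gtrue_ge0 : forall s, 0 <= gtrue s;
  gtrue_le1 : forall s, gtrue s <= 1 }.

Definition gfalse (g : pguard) (s : state) : R := 1 - gtrue g s.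

Inductive prog :=
| PEmpty
| PSkip
| PHalt
| PAssign of Var & dexp
| PSeq of prog & prog
| PNDet of prog & prog
| PIte of pguard & prog & prog
| PWhile of pguard & prog.

Definition runtime := state -> \bar R.
Definition is_runtime (f : runtime) : Prop := forall s, (0 <= f s)%E.
Definition rt_le (f g : runtime) : Prop := forall s, (f s <= g s)%E.

(* least fixed point on the complete lattice T (pointwise order):
   the (pointwise) infimum of all pre-fixed points in T (Knaster-Tarski) *)
Definition lfp (Phi : runtime -> runtime) : runtime :=
  fun s => ereal_inf [set y | exists X : runtime,
             [/\ is_runtime X, rt_le (Phi X) X & y = X s]].

Local Open Scope ereal_scope.

Fixpoint ert (c : prog) (f : runtime) : runtime :=
  match c with
  | PEmpty => f
  | PSkip => fun s => 1 + f s
  | PHalt => fun _ => 0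
  | PAssign x mu => fun s =>
      1 + \esum_(v in [set: Val]) ((dsem mu s v)%:E * f (upd s x v))
  | PSeq c1 c2 => ert c1 (ert c2 f)
  | PNDet c1 c2 => fun s => maxe (ert c1 f s) (ert c2 f s)
  | PIte g c1 c2 => fun s =>
      1 + (gtrue g s)%:E * ert c1 f s + (gfalse g s)%:E * ert c2 f s
  | PWhile g c' => lfp (fun X s =>
      1 + (gfalse g s)%:E * f s + (gtrue g s)%:E * ert c' X s)
  end.

Definition rt_sup (F : nat -> runtime) : runtime :=
  fun s => ereal_sup (range (fun n => F n s)).

End PProgs.

(* Every construct of [ert] is built from constants, nonnegative scalings,
   finite and countable sums, binary maxima and composition, and each of
   these commutes with suprema of nondecreasing chains in [0, +oo].  For a
   loop, the characteristic function is jointly continuous in the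
   continuation run-time and in the iterate, so by Kleene its least fixed point is
   [sup_k Phi_f^k 0]; continuity in [f] then amounts to exchanging the two
   suprema over [k] and over the chain. *)
From HB Require Import structures.
From mathcomp Require Import all_boot all_order all_algebra.
From mathcomp Require Import all_classical all_reals all_analysis.
Set Implicit Arguments. Unset Strict Implicit. Unset Printing Implicit Defensive.
Import Order.TTheory GRing.Theory Num.Theory.
Local Open Scope classical_set_scope.
Local Open Scope ring_scope.
Local Open Scope ereal_scope.

Notation esup u := (ereal_sup (range u)).

Section EsupChain.
Variable R : realType.
Implicit Types (u v : nat -> \bar R) (p q : R).

Lemma esup_ub u n : u n <= esup u.
Proof. by apply: ereal_sup_ubound; exists n. Qed.

Lemma ge_esup u x : (forall n, u n <= x) -> esup u <= x.
Proof. by move=> ux; apply: ge_ereal_sup => _ [n _ <-]. Qed.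

Lemma le_esup u v : (forall n, u n <= v n) -> esup u <= esup v.
Proof. by move=> uv; apply: ge_esup => n; exact: le_trans (uv n) (esup_ub _ _). Qed.

Lemma esup_swap (a : nat -> nat -> \bar R) :
  esup (fun k => esup (fun n => a n k)) = esup (fun n => esup (fun k => a n k)).
Proof.
apply/eqP; rewrite eq_le; apply/andP; split; apply: ge_esup => i; apply: ge_esup => j.
  exact: le_trans (esup_ub (fun k => a j k) i) (esup_ub _ j).
exact: le_trans (esup_ub (fun n => a n j) i) (esup_ub _ j).
Qed.

Lemma esup_max u v : esup (fun n => maxe (u n) (v n)) = maxe (esup u) (esup v).
Proof.
apply/eqP; rewrite eq_le; apply/andP; split.
  by apply: ge_esup => n; rewrite ge_max !le_max (esup_ub u n) (esup_ub v n) orbT.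
by rewrite ge_max; apply/andP; split; apply: le_esup => n; rewrite le_max lexx ?orbT.
Qed.

Lemma nondecreasing_cvg u : (forall n, u n <= u n.+1) -> u @ \oo --> esup u.
Proof. by move=> /nondecreasing_seqP; exact: ereal_nondecreasing_cvgn. Qed.

Lemma nondecreasing_cvg_esup u e :
  (forall n, u n <= u n.+1) -> u @ \oo --> e -> esup u = e.
Proof. by move=> /nondecreasing_cvg u_sup u_e; exact: cvg_unique _ u_sup u_e. Qed.

Lemma esup_cst (x : \bar R) : esup (fun _ : nat => x) = x.
Proof. by apply: nondecreasing_cvg_esup => //; exact: cvg_cst. Qed.

Lemma esupD u v : (forall n, u n <= u n.+1) -> (forall n, v n <= v n.+1) ->
  (forall n, 0 <= u n) -> (forall n, 0 <= v n) ->
  esup (fun n => u n + v n) = esup u + esup v.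
Proof.
move=> u_nd v_nd u_ge0 v_ge0; apply: nondecreasing_cvg_esup.
  by move=> n; apply: leeD.
apply: cvgeD; [|exact: nondecreasing_cvg|exact: nondecreasing_cvg].
by apply: ge0_adde_def; rewrite inE; exact: le_trans (esup_ub _ 0%N).
Qed.

Lemma esupZl p u : (0 <= p)%R -> (forall n, u n <= u n.+1) ->
  esup (fun n => p%:E * u n) = p%:E * esup u.
Proof.
move=> p_ge0 u_nd; apply: nondecreasing_cvg_esup.
  by move=> n; apply: lee_wpmul2l; rewrite ?lee_fin.
by apply: cvgeZl => //; exact: nondecreasing_cvg.
Qed.

Lemma esup_affine p q u v : (0 <= p)%R -> (0 <= q)%R ->
  (forall n, u n <= u n.+1) -> (forall n, v n <= v n.+1) ->
  (forall n, 0 <= u n) -> (forall n, 0 <= v n) ->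
  esup (fun n => 1 + p%:E * u n + q%:E * v n) = 1 + p%:E * esup u + q%:E * esup v.
Proof.
move=> p_ge0 q_ge0 u_nd v_nd u_ge0 v_ge0.
have pu_ge0 n : 0 <= p%:E * u n by apply: mule_ge0; rewrite ?lee_fin.
have qv_ge0 n : 0 <= q%:E * v n by apply: mule_ge0; rewrite ?lee_fin.
have pu_nd n : p%:E * u n <= p%:E * u n.+1 by apply: lee_wpmul2l; rewrite ?lee_fin.
have qv_nd n : q%:E * v n <= q%:E * v n.+1 by apply: lee_wpmul2l; rewrite ?lee_fin.
rewrite (esupD (u := fun n => 1 + p%:E * u n)) //; last 2 first.
- by move=> n; apply: leeD2l.
- by move=> n; apply: adde_ge0.
by rewrite (esupD (u := fun _ => 1)) // esup_cst !esupZl.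
Qed.

Lemma esup_sum (T : Type) (s : seq T) (a : nat -> T -> \bar R) :
  (forall n x, 0 <= a n x) -> (forall n x, a n x <= a n.+1 x) ->
  \sum_(x <- s) esup (fun n => a n x) = esup (fun n => \sum_(x <- s) a n x).
Proof.
move=> a_ge0 a_nd; elim: s => [|y s IHs].
  by rewrite big_nil; under eq_fun do rewrite big_nil; rewrite esup_cst.
rewrite big_cons IHs; under [in RHS]eq_fun do rewrite big_cons.
rewrite esupD // => n; first exact: lee_sum.
exact: sume_ge0.
Qed.

Lemma esup_esum (T : choiceType) (a : nat -> T -> \bar R) :
  (forall n x, 0 <= a n x) -> (forall n x, a n x <= a n.+1 x) ->
  \esum_(x in [set: T]) esup (fun n => a n x) =
  esup (fun n => \esum_(x in [set: T]) a n x).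
Proof.
move=> a_ge0 a_nd; apply/eqP; rewrite eq_le; apply/andP; split; last first.
  by apply: ge_esup => n; apply: le_esum => x _; exact: esup_ub.
apply: ge_ereal_sup => _ [X [finX _] <-].
rewrite fsbig_finite // esup_sum //; apply: le_esup => n.
by rewrite -fsbig_finite //; apply: esum_ge; exists X.
Qed.

End EsupChain.

Section RuntimeTransformers.
Variables (R : realType) (Var : eqType) (Val : choiceType).
Notation runtime := (runtime R Var Val).
Implicit Types (f g X : runtime) (F : nat -> runtime) (E : runtime -> runtime).

Definition preserves_runtime E := forall X, is_runtime X -> is_runtime (E X).

Definition rt_continuous E := forall F,
  (forall n, is_runtime (F n)) -> (forall n, rt_le (F n) (F n.+1)) ->
  E (rt_sup F) = rt_sup (fun n => E (F n)).

Lemma rt_sup_runtime F : (forall n, is_runtime (F n)) -> is_runtime (rt_sup F).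
Proof. by move=> F_rt s; exact: le_trans (F_rt 0%N s) (esup_ub _ _). Qed.

Lemma rt_sup_cst f : rt_sup (fun _ : nat => f) = f.
Proof. by apply: funext => s; rewrite /rt_sup esup_cst. Qed.

Lemma rt_continuous_monotone E : rt_continuous E ->
  forall f g, is_runtime f -> is_runtime g -> rt_le f g -> rt_le (E f) (E g).
Proof.
move=> E_cont f g f_rt g_rt fg.
pose G n := if n is 0%N then f else g.
have supG : rt_sup G = g.
  apply: funext => s; apply/eqP; rewrite eq_le; apply/andP; split.
    by apply: ge_esup => -[|n].
  exact: (esup_ub (fun n => G n s) 1%N).
have := E_cont G; rewrite supG => ->; last 2 first.
- by case.
- by move=> [|n] s //=.
by move=> s; exact: (esup_ub (fun n => E (G n) s) 0%N).
Qed.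

Lemma rt_continuous_chain E F : rt_continuous E ->
  (forall n, is_runtime (F n)) -> (forall n, rt_le (F n) (F n.+1)) ->
  forall n, rt_le (E (F n)) (E (F n.+1)).
Proof.
move=> E_cont F_rt F_nd n.
exact: rt_continuous_monotone E_cont _ _ (F_rt n) (F_rt n.+1) (F_nd n).
Qed.

Lemma lfp_kleene E : preserves_runtime E -> rt_continuous E ->
  lfp E = rt_sup (fun k => iter k E (fun _ => 0)).
Proof.
move=> E_rt E_cont; have E_mono := rt_continuous_monotone E_cont.
pose I k := iter k E (fun _ => 0).
have I_rt k : is_runtime (I k) by elim: k => [|k IHk] s //=; apply: E_rt.
have I_nd k : rt_le (I k) (I k.+1).
  elim: k => [|k IHk] s; first exact: (I_rt 1%N s).
  exact: E_mono (I_rt k) (I_rt k.+1) IHk s.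
apply: funext => s; apply/eqP; rewrite eq_le; apply/andP; split.
  apply: ereal_inf_lbound; exists (rt_sup I); split => //; first exact: rt_sup_runtime.
  rewrite (E_cont I) // => t.
  by apply: ge_esup => n; exact: (esup_ub (fun k => I k t) n.+1).
apply: le_ereal_inf_tmp => _ [X [X_rt EX_le ->]]; apply: ge_esup => k.
suff : rt_le (I k) X by apply.
elim: k => [|k IHk] t /=; first exact: X_rt.
by apply: le_trans (EX_le t); exact: E_mono (I_rt k) X_rt IHk t.
Qed.

Section ParametricLfp.
Variable Phi : runtime -> runtime -> runtime.
Hypothesis Phi_rt : forall f X, is_runtime f -> is_runtime X -> is_runtime (Phi f X).
Hypothesis Phi_cont : forall F Y,
  (forall n, is_runtime (F n)) -> (forall n, rt_le (F n) (F n.+1)) ->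
  (forall n, is_runtime (Y n)) -> (forall n, rt_le (Y n) (Y n.+1)) ->
  Phi (rt_sup F) (rt_sup Y) = rt_sup (fun n => Phi (F n) (Y n)).

Lemma rt_continuous_param_r f : is_runtime f -> rt_continuous (Phi f).
Proof. by move=> f_rt Y Y_rt Y_nd; rewrite -{1}(rt_sup_cst f) Phi_cont // => n s. Qed.

Lemma rt_continuous_param_l X : is_runtime X -> rt_continuous (Phi ^~ X).
Proof. by move=> X_rt F F_rt F_nd; rewrite -{1}(rt_sup_cst X) Phi_cont // => n s. Qed.

Lemma param_monotone f f' X X' : is_runtime f -> is_runtime f' ->
  is_runtime X -> is_runtime X' -> rt_le f f' -> rt_le X X' ->
  rt_le (Phi f X) (Phi f' X').
Proof.
move=> f_rt f'_rt X_rt X'_rt ff' XX' s; apply: le_trans.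
  exact: rt_continuous_monotone (rt_continuous_param_r f_rt) _ _ X_rt X'_rt XX' s.
exact: rt_continuous_monotone (rt_continuous_param_l X'_rt) _ _ f_rt f'_rt ff' s.
Qed.

Lemma lfp_param_continuous : rt_continuous (fun f => lfp (Phi f)).
Proof.
move=> F F_rt F_nd; pose I f k := iter k (Phi f) (fun _ => 0).
have I_rt f k : is_runtime f -> is_runtime (I f k).
  by move=> f_rt; elim: k => [|k IHk] s //=; apply: Phi_rt.
have I_nd k n : rt_le (I (F n) k) (I (F n.+1) k).
  by elim: k => [|k IHk] s //=; apply: param_monotone => //; exact: I_rt.
have I_sup k : I (rt_sup F) k = rt_sup (fun n => I (F n) k).
  elim: k => [|k IHk] /=; first by rewrite rt_sup_cst.
  by rewrite IHk Phi_cont // => n; exact: I_rt.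
have lfp_iter f : is_runtime f -> lfp (Phi f) = rt_sup (I f).
  move=> f_rt; apply: lfp_kleene; last exact: rt_continuous_param_r.
  by move=> X; exact: Phi_rt.
rewrite lfp_iter; last exact: rt_sup_runtime.
under [in RHS]eq_fun do rewrite lfp_iter //.
by apply: funext => s; rewrite /rt_sup -esup_swap; under eq_fun do rewrite I_sup.
Qed.

End ParametricLfp.

Definition loop_step E (b : pguard R Var Val) f X : runtime :=
  fun s => 1 + (gfalse b s)%:E * f s + (gtrue b s)%:E * E X s.

Lemma gfalse_ge0 (b : pguard R Var Val) s : (0 <= gfalse b s)%R.
Proof. by rewrite /gfalse subr_ge0 gtrue_le1. Qed.

Lemma loop_step_runtime E b f X : preserves_runtime E ->
  is_runtime f -> is_runtime X -> is_runtime (loop_step E b f X).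
Proof.
move=> E_rt f_rt X_rt s; apply: adde_ge0; first apply: adde_ge0 => //;
  apply: mule_ge0; rewrite ?lee_fin ?gtrue_ge0 ?gfalse_ge0 //; exact: E_rt.
Qed.

Lemma loop_step_continuous E b F Y : preserves_runtime E -> rt_continuous E ->
  (forall n, is_runtime (F n)) -> (forall n, rt_le (F n) (F n.+1)) ->
  (forall n, is_runtime (Y n)) -> (forall n, rt_le (Y n) (Y n.+1)) ->
  loop_step E b (rt_sup F) (rt_sup Y) = rt_sup (fun n => loop_step E b (F n) (Y n)).
Proof.
move=> E_rt E_cont F_rt F_nd Y_rt Y_nd; apply: funext => s.
rewrite /loop_step (E_cont _ Y_rt Y_nd) /rt_sup esup_affine ?gfalse_ge0 ?gtrue_ge0 //.
- by move=> n; exact: F_nd.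
- by move=> n; exact: rt_continuous_chain E_cont Y_rt Y_nd n s.
- by move=> n; exact: F_rt.
- by move=> n; exact: E_rt.
Qed.

End RuntimeTransformers.

Section Ert.
Variables (R : realType) (Var : eqType) (Val : choiceType).
Implicit Types (c : prog R Var Val) (f : runtime R Var Val).

Lemma ert_runtime c : preserves_runtime (ert c).
Proof.
elim: c => [|||x mu|c1 IH1 c2 IH2|c1 IH1 c2 IH2|b c1 IH1 c2 IH2|b c IH] f f_rt s /=.
- exact: f_rt.
- exact: adde_ge0.
- by [].
- apply: adde_ge0 => //; apply: esum_ge0 => v _.
  by apply: mule_ge0; rewrite ?lee_fin ?dsem_ge0.
- exact/IH1/IH2.
- by rewrite le_max IH1.
- apply: adde_ge0; first apply: adde_ge0 => //; apply: mule_ge0;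
    rewrite ?lee_fin ?gtrue_ge0 ?gfalse_ge0 //; [exact: IH1|exact: IH2].
- by apply: le_ereal_inf_tmp => _ [X [X_rt _ ->]].
Qed.

Lemma ert_continuous c : rt_continuous (ert c).
Proof.
elim: c => [| | |x mu|c1 IH1 c2 IH2|c1 IH1 c2 IH2|b c1 IH1 c2 IH2|b c IH] F F_rt F_nd.
- by [].
- apply: funext => s; rewrite /= /rt_sup.
  by rewrite (esupD (u := fun _ => 1)) ?esup_cst // => n; [exact: F_nd|exact: F_rt].
- by apply: funext => s; rewrite /rt_sup esup_cst.
- apply: funext => s; rewrite /= /rt_sup.
  have d_ge0 v : 0 <= (dsem mu s v)%:E by rewrite lee_fin dsem_ge0.
  have dF_ge0 n v : 0 <= (dsem mu s v)%:E * F n (upd s x v).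
    exact: mule_ge0 (F_rt _ _).
  have dF_nd n v :
      (dsem mu s v)%:E * F n (upd s x v) <= (dsem mu s v)%:E * F n.+1 (upd s x v).
    exact: lee_wpmul2l (F_nd _ _).
  rewrite (esupD (u := fun _ => 1)) ?esup_cst //; last 2 first.
  + by move=> n; apply: le_esum => v _.
  + by move=> n; exact: esum_ge0.
  rewrite -esup_esum //; congr (1 + _); apply: eq_esum => v _.
  by rewrite esupZl ?dsem_ge0 // => n; exact: F_nd.
- have ert2_nd := rt_continuous_chain IH2 F_rt F_nd.
  by rewrite /= IH2 // IH1 // => n; exact: ert_runtime.
- by apply: funext => s; rewrite /= IH1 // IH2 // /rt_sup esup_max.
- apply: funext => s; rewrite /= IH1 // IH2 // /rt_sup.
  rewrite esup_affine ?gtrue_ge0 ?gfalse_ge0 // => n.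
  + exact: rt_continuous_chain IH1 F_rt F_nd n s.
  + exact: rt_continuous_chain IH2 F_rt F_nd n s.
  + exact: ert_runtime _ _ (F_rt n) s.
  + exact: ert_runtime _ _ (F_rt n) s.
- apply: (lfp_param_continuous (Phi := loop_step (ert c) b)) => //.
  + by move=> f X; apply: loop_step_runtime; exact: ert_runtime.
  + by move=> *; apply: loop_step_continuous => //; exact: ert_runtime.
Qed.

End Ert.

Theorem lemma1 (R : realType) (Var : eqType) (Val : choiceType)
  (C : prog R Var Val) (F : nat -> runtime R Var Val) :
  (forall n, is_runtime (F n)) ->
  (forall n, rt_le (F n) (F n.+1)) ->
  ert C (rt_sup F) = rt_sup (fun n => ert C (F n)).
Proof. exact: ert_continuous. Qed.
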